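(* Assume (i) $\sigma<2\phi(0)$; (ii) $\beta<\frac{e^b+1}{2}\exp\!\left(-b-\frac{\sigma^2}{2}\right)$; (iii) $\delta_\beta<\delta^\ast$, where $\delta_\beta\in(0,b)$ is the unique solution of $\varphi(\delta_\beta)=\beta N$ and $\delta^\ast\in(\delta_{\mathrm{th}},b)$ is the unique solution of $\frac{\sigma}{\phi(\Phi^{-1}(q(\delta^\ast)))}\cdot\frac{e^b-e^{b-\delta^\ast}}{e^b-1}=1$; and (iv) $u\le Ne^{\sigma^2/2}+N\,\Phi\bigl(-d_1(\varphi(\delta^\ast),\delta^\ast)\bigr)(e^b-1)$. Then the Stackelberg game has a unique equilibrium, in which governance sets $\delta=\delta^\ast$ and the vault issues $F=\varphi(\delta^\ast)$ (and participates).
   Context: Parameters: $N>0$ (collateral value), $\sigma>0$ (collateral volatility), $b>0$ (outside return rate), $\beta>0$ (collateral factor), $u\in\mathbb{R}$ (vault's outside utility). $\Phi,\phi$ are the standard normal cdf and pdf. For $F>0$, $\delta\in\mathbb{R}$: $d_1(F,\delta)=\frac{\log(N/(Fe^\delta))+\sigma^2/2}{\sigma}$, $d_2=d_1-\sigma$, $P(F,\delta)=Fe^\delta\Phi(-d_2)-N\Phi(-d_1)$, and the vault objective $V(F,\delta)=Ne^{\sigma^2/2}+F(e^b-e^\delta)-(e^b-1)P(F,\delta)$. For $\delta\in(0,b)$: $q(\delta)=\frac{e^{b-\delta}-1}{e^b-1}$, $\varphi(\delta)=N\exp[\sigma\Phi^{-1}(q(\delta))-\delta-\sigma^2/2]$;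 $\delta_{\mathrm{th}}=b-\log\frac{e^b+1}{2}$. Stackelberg game: governance (leader) chooses an interest rate $\delta\in(0,b)$; the vault (follower) then chooses issuance $F$ maximizing $V(F,\delta)$ subject to the leverage constraint $0\le F\le\beta N$ and the participation constraint $V(F,\delta)\ge u$ (if no feasible $F$ satisfies the participation constraint, the vault does not participate, $F=0$). Governance's payoff is $F(e^\delta-1)$, with $F$ the vault's response; governance maximizes this anticipating the vault's response. *)

From Stdlib Require Import Reals Lra ClassicalEpsilon.
From Coquelicot Require Import Coquelicot.
Open Scope R_scope.

Definition npdf (x : R) : R := exp (- x ^ 2 / 2) / sqrt (2 * PI).

Definition ncdf (x : R) : R := RInt_gen npdf (Rbar_locally m_infty) (at_point x).

(* inverse of the standard normal cdf (meaningful for p in (0,1)) *)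
Definition ncdf_inv (p : R) : R := epsilon (inhabits 0) (fun x => ncdf x = p).

Section Model.
Variables (N sigma b : R).

Definition d_one (F delta : R) : R :=
  (ln (N / (F * exp delta)) + sigma ^ 2 / 2) / sigma.
Definition d_two (F delta : R) : R := d_one F delta - sigma.

(* put value; for F <= 0 (only F = 0 is relevant) it is the limit value 0 *)
Definition Put (F delta : R) : R :=
  if Rlt_dec 0 F then
    F * exp delta * ncdf (- d_two F delta) - N * ncdf (- d_one F delta)
  else 0.

Definition Vobj (F delta : R) : R :=
  N * exp (sigma ^ 2 / 2) + F * (exp b - exp delta) - (exp b - 1) * Put F delta.

Definition qf (delta : R) : R := (exp (b - delta) - 1) / (exp b - 1).

Definition varphi (delta : R) : R :=
  N * exp (sigma * ncdf_inv (qf delta) - delta - sigma ^ 2 / 2).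

Definition delta_th : R := b - ln ((exp b + 1) / 2).

Variables (beta u : R).

Definition feasible (delta F : R) : Prop :=
  0 <= F <= beta * N /\ u <= Vobj F delta.

Definition vault_best_response (delta F : R) : Prop :=
  (feasible delta F /\ forall F', feasible delta F' -> Vobj F' delta <= Vobj F delta)
  \/ ((forall F', ~ feasible delta F') /\ F = 0).

Definition gov_payoff (delta F : R) : R := F * (exp delta - 1).

(* Stackelberg (subgame-perfect) equilibrium: governance rate delta and
   vault strategy Fs (response to every admissible rate) *)
Definition stackelberg_eq (delta : R) (Fs : R -> R) : Prop :=
  0 < delta < b /\
  (forall d, 0 < d < b -> vault_best_response d (Fs d)) /\
  (forall d, 0 < d < b -> gov_payoff d (Fs d) <= gov_payoff delta (Fs delta)).

End Model.

(* Backward induction, in three parts.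
   1. Normal distribution: the Gaussian integral is obtained by the Feynman
      trick (RInt_0^1 e^(-x^2(1+t^2))/(1+t^2) dt + (RInt_0^x e^(-t^2))^2 is
      constant = PI/4), so ncdf is a differentiable increasing bijection
      R -> (0,1) with derivative npdf, inverted by ncdf_inv.
   2. Vault: dV/dF = (e^b - 1) e^delta (q(delta) - Phi(-d_2)) changes sign at
      varphi(delta), so min(varphi(delta), beta N) is the unique maximiser on
      [0, beta N]; with participation this gives a unique best response.
   3. Governance: on the uncapped branch the payoff is a positive multiple of
      G(z) = e^(sigma z) (1 - Phi(z)) at z = Phi^-1(q(delta)); G is unimodal
      with peak at the zero of sigma (1 - Phi) - phi, i.e. at the first-order
      condition defining delta_star; the capped branch is dominated by
      delta_beta.  Hence delta_star is governance's unique optimum.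
   Conditions (i), (ii) and delta_star > delta_th only ensure, in the paper,
   that delta_beta and delta_star exist; the argument below does not use them. *)

From Stdlib Require Import Reals Lra ClassicalEpsilon.
From Coquelicot Require Import Coquelicot.
Open Scope R_scope.

Lemma strict_incr_of_derive (f df : R -> R) (a b : R) :
  a < b -> (forall c, a <= c <= b -> is_derive f c (df c)) ->
  (forall c, a < c < b -> 0 < df c) -> f a < f b.
Proof.
  intros Hab Hd Hpos.
  destruct (MVT_cor2 f df a b Hab) as [c [E Hc]].
  - intros c Hc; apply is_derive_Reals, Hd, Hc.
  - specialize (Hpos c Hc); nra.
Qed.

Lemma strict_decr_of_derive (f df : R -> R) (a b : R) :
  a < b -> (forall c, a <= c <= b -> is_derive f c (df c)) ->
  (forall c, a < c < b -> df c < 0) -> f b < f a.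
Proof.
  intros Hab Hd Hneg.
  destruct (MVT_cor2 f df a b Hab) as [c [E Hc]].
  - intros c Hc; apply is_derive_Reals, Hd, Hc.
  - specialize (Hneg c Hc); nra.
Qed.

Lemma continuous_of_ex_derive (f : R -> R) (x : R) : ex_derive f x -> continuous f x.
Proof. apply (@ex_derive_continuous R_AbsRing R_NormedModule). Qed.

Lemma ex_RInt_of_continuous (f : R -> R) (a b : R) :
  (forall x, continuous f x) -> ex_RInt f a b.
Proof. intros Hf; apply (@ex_RInt_continuous R_CompleteNormedModule); intros; apply Hf. Qed.

Lemma is_derive_eq (f : R -> R) (x l l' : R) :
  is_derive f x l -> l = l' -> is_derive f x l'.
Proof. intros H E; subst; exact H. Qed.

Lemma exp_gt_1 (x : R) : 0 < x -> 1 < exp x.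
Proof. intros; rewrite <- exp_0; apply exp_increasing; lra. Qed.

Lemma sqrt_PI_pos : 0 < sqrt PI.
Proof. apply sqrt_lt_R0, PI_RGT_0. Qed.

(** The Gaussian integral *)

Definition gauss (x : R) : R := exp (- (x * x)).
Definition gauss_int (x : R) : R := RInt gauss 0 x.
Definition feynman_integrand (x t : R) : R :=
  exp (- (x * x) * (1 + t * t)) / (1 + t * t).
Definition feynman_sum (x : R) : R :=
  RInt (feynman_integrand x) 0 1 + gauss_int x * gauss_int x.

Lemma one_plus_sq_pos (t : R) : 0 < 1 + t * t.
Proof. nra. Qed.

Lemma gauss_continuous (x : R) : continuous gauss x.
Proof. apply continuous_of_ex_derive; unfold gauss; auto_derive; auto. Qed.

Lemma ex_RInt_gauss (a b : R) : ex_RInt gauss a b.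
Proof. apply ex_RInt_of_continuous; intros; apply gauss_continuous. Qed.

Lemma gauss_int_derive (x : R) : is_derive gauss_int x (gauss x).
Proof.
  apply is_derive_RInt with 0.
  - apply filter_forall; intros; apply (@RInt_correct R_CompleteNormedModule), ex_RInt_gauss.
  - apply gauss_continuous.
Qed.

Lemma gauss_int_nonneg (x : R) : 0 <= x -> 0 <= gauss_int x.
Proof.
  intros; apply RInt_ge_0; auto; [apply ex_RInt_gauss|].
  intros; left; apply exp_pos.
Qed.

Lemma gauss_int_incr (x y : R) : x < y -> gauss_int x < gauss_int y.
Proof.
  intros H; apply (strict_incr_of_derive _ gauss); auto.
  - intros; apply gauss_int_derive.
  - intros; apply exp_pos.
Qed.

Lemma feynman_integrand_derive (x t : R) :
  is_derive (fun z => feynman_integrand z t) x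
    (-2 * x * exp (- (x * x) * (1 + t * t))).
Proof.
  unfold feynman_integrand; pose proof (one_plus_sq_pos t).
  auto_derive; [auto|]. field; lra.
Qed.

Lemma feynman_integrand_continuous (x t : R) : continuous (feynman_integrand x) t.
Proof.
  apply continuous_of_ex_derive; unfold feynman_integrand.
  pose proof (one_plus_sq_pos t); auto_derive; lra.
Qed.

Lemma ex_RInt_feynman_integrand (x a b : R) : ex_RInt (feynman_integrand x) a b.
Proof. apply ex_RInt_of_continuous; intros; apply feynman_integrand_continuous. Qed.

(* Joint continuity of the x-derivative, needed to differentiate under RInt. *)
Lemma feynman_integrand_derive_continuous (x t : R) :
  continuity_2d_pt (fun u v => Derive (fun z => feynman_integrand z v) u) x t.
Proof.
  apply continuity_2d_pt_ext with (fun u v => (-2 * u) * exp (- (u * u) * (1 + v * v))).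
  { intros; symmetry; apply is_derive_unique, feynman_integrand_derive. }
  apply continuity_2d_pt_mult.
  - apply continuity_2d_pt_mult; [apply continuity_2d_pt_const|apply continuity_2d_pt_id1].
  - apply continuity_1d_2d_pt_comp with (f := exp) (g := fun u v => - (u * u) * (1 + v * v)).
    + apply derivable_continuous_pt, derivable_pt_exp.
    + apply continuity_2d_pt_mult.
      * apply continuity_2d_pt_opp, continuity_2d_pt_mult; apply continuity_2d_pt_id1.
      * apply continuity_2d_pt_plus; [apply continuity_2d_pt_const|].
        apply continuity_2d_pt_mult; apply continuity_2d_pt_id2.
Qed.

(* The substitution t |-> x t turns the derivative of the first summand
   into -2 gauss(x) gauss_int(x). *)
Lemma RInt_feynman_integrand_derive (x : R) :
  RInt (fun t => Derive (fun z => feynman_integrand z t) x) 0 1 = -2 * gauss x * gauss_int x.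
Proof.
  rewrite (RInt_ext _ (fun t => scal (-2 * gauss x) (scal x (gauss (x * t + 0))))).
  2:{ intros t _.
      assert (E : Derive (fun z : R => feynman_integrand z t) x
                  = -2 * x * exp (- (x * x) * (1 + t * t)))
        by apply is_derive_unique, feynman_integrand_derive.
      rewrite E.
      unfold scal; simpl; unfold mult; simpl; unfold gauss.
      replace (- (x * x) * (1 + t * t)) with (- (x * x) + - ((x * t + 0) * (x * t + 0))) by ring.
      rewrite exp_plus; ring. }
  rewrite (@RInt_scal R_CompleteNormedModule).
  2:{ apply ex_RInt_of_continuous; intros; apply continuous_of_ex_derive.
      unfold gauss, scal; simpl; unfold mult; simpl; auto_derive; auto. }
  rewrite (@RInt_comp_lin R_CompleteNormedModule) by apply ex_RInt_gauss.
  unfold gauss_int; replace (x * 0 + 0) with 0 by ring; replace (x * 1 + 0) with x by ring.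
  unfold scal; simpl; unfold mult; simpl; ring.
Qed.

Lemma feynman_sum_derive (x : R) : is_derive feynman_sum x 0.
Proof.
  assert (D1 : is_derive (fun z => RInt (fun t => feynman_integrand z t) 0 1) x
                 (-2 * gauss x * gauss_int x)).
  { rewrite <- RInt_feynman_integrand_derive. apply is_derive_RInt_param.
    - apply filter_forall; intros; eexists; apply feynman_integrand_derive.
    - intros; apply feynman_integrand_derive_continuous.
    - apply filter_forall; intros; apply ex_RInt_feynman_integrand. }
  pose proof (gauss_int_derive x) as D2.
  pose proof (is_derive_mult gauss_int gauss_int x _ _ D2 D2 Rmult_comm) as D3.
  eapply is_derive_eq; [exact (is_derive_plus _ _ x _ _ D1 D3)|].
  unfold plus, mult; simpl; unfold mult; simpl; ring.
Qed.

Lemma feynman_sum_0 : feynman_sum 0 = PI / 4.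
Proof.
  unfold feynman_sum, gauss_int; rewrite RInt_point; unfold zero; simpl.
  rewrite (RInt_ext _ (fun t => / (1 + t ^ 2))).
  2:{ intros t _; unfold feynman_integrand.
      change (exp (- (0 * 0) * (1 + t * t)) / (1 + t * t) = / (1 + t ^ 2)).
      replace (- (0 * 0) * (1 + t * t)) with 0 by ring; rewrite exp_0.
      pose proof (one_plus_sq_pos t); field; nra. }
  rewrite (is_RInt_unique _ 0 1 (minus (atan 1) (atan 0))).
  - rewrite atan_1, atan_0; unfold minus, plus, opp; simpl; ring.
  - apply (@is_RInt_derive R_CompleteNormedModule).
    + intros; apply is_derive_Reals, derivable_pt_lim_atan.
    + intros; apply continuous_of_ex_derive; pose proof (one_plus_sq_pos x).
      auto_derive; nra.
Qed.

Lemma feynman_sum_const (x : R) : 0 < x -> feynman_sum x = PI / 4.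
Proof.
  intros Hx; rewrite <- feynman_sum_0; symmetry.
  apply (@eq_is_derive R_NormedModule); [intros; apply feynman_sum_derive|lra].
Qed.

(* The defect (sqrt PI / 2)^2 - gauss_int(x)^2 is the Feynman integral, which
   lies between 0 and 1/(1+x^2). *)
Lemma gauss_int_sq_defect (x : R) :
  0 < x -> 0 <= PI / 4 - gauss_int x * gauss_int x <= / (1 + x * x).
Proof.
  intros Hx; rewrite <- (feynman_sum_const x Hx); unfold feynman_sum.
  assert (E : forall I J : R, I + J * J - J * J = I) by (intros; ring).
  rewrite E; split.
  - apply RInt_ge_0; [lra|apply ex_RInt_feynman_integrand|].
    intros t _; unfold feynman_integrand; pose proof (one_plus_sq_pos t).
    apply Rlt_le, Rdiv_lt_0_compat; [apply exp_pos|lra].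
  - apply Rle_trans with (RInt (fun _ => exp (- (x * x))) 0 1).
    + apply RInt_le; [lra|apply ex_RInt_feynman_integrand|apply ex_RInt_const|].
      intros t Ht; unfold feynman_integrand; pose proof (one_plus_sq_pos t).
      assert (exp (- (x * x) * (1 + t * t)) <= exp (- (x * x))).
      { assert (0 < x * x * (t * t)) by (apply Rmult_lt_0_compat; nra).
        left; apply exp_increasing; nra. }
      apply Rle_trans with (exp (- (x * x) * (1 + t * t))); [|lra].
      unfold Rdiv; rewrite <- (Rmult_1_r (exp _)) at 2.
      apply Rmult_le_compat_l; [apply Rlt_le, exp_pos|].
      rewrite <- Rinv_1; apply Rinv_le_contravar; nra.
    + rewrite RInt_const; unfold scal; simpl; unfold mult; simpl.
      rewrite exp_Ropp, Rminus_0_r, Rmult_1_l; apply Rinv_le_contravar; [nra|].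
      pose proof (exp_ineq1_le (x * x)); lra.
Qed.

Lemma sqrt_PI_half_sq : sqrt PI / 2 * (sqrt PI / 2) = PI / 4.
Proof.
  replace (sqrt PI / 2 * (sqrt PI / 2)) with (sqrt PI * sqrt PI / 4) by field.
  rewrite sqrt_sqrt; [lra|pose proof PI_RGT_0; lra].
Qed.

Lemma gauss_int_le (x : R) : 0 <= x -> gauss_int x <= sqrt PI / 2.
Proof.
  intros Hx; pose proof sqrt_PI_pos; pose proof sqrt_PI_half_sq.
  pose proof (gauss_int_nonneg x Hx).
  destruct (Req_dec x 0) as [->|Hx0].
  - unfold gauss_int; rewrite RInt_point; unfold zero; simpl; lra.
  - pose proof (gauss_int_sq_defect x ltac:(lra)); nra.
Qed.

(* gauss_int(x) tends to sqrt PI / 2: the defect is at most 1/x. *)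
Lemma gauss_int_tends (eps : R) :
  0 < eps -> exists M, forall x, M <= x -> sqrt PI / 2 - eps < gauss_int x.
Proof.
  intros He; set (s := sqrt PI / 2).
  assert (Hs : 0 < s) by (unfold s; pose proof sqrt_PI_pos; lra).
  pose proof sqrt_PI_half_sq as Hss; fold s in Hss.
  assert (Hinv : 0 < / (eps * s)) by (apply Rinv_0_lt_compat; nra).
  exists (/ (eps * s) + 1); intros x Hx.
  assert (Hx0 : 0 < x) by lra.
  pose proof (gauss_int_sq_defect x Hx0) as [_ Hd].
  pose proof (gauss_int_nonneg x (Rlt_le _ _ Hx0)).
  assert (Hxe : / x < eps * s).
  { rewrite <- (Rinv_inv (eps * s)); apply Rinv_lt_contravar; nra. }
  assert (/ (1 + x * x) < / x) by (apply Rinv_lt_contravar; nra).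
  assert (Hprod : (s - gauss_int x) * (s + gauss_int x) < eps * s) by nra.
  nra.
Qed.

(** The standard normal distribution *)

Lemma sqrt_2PI_pos : 0 < sqrt (2 * PI).
Proof. apply sqrt_lt_R0; pose proof PI_RGT_0; lra. Qed.

Lemma npdf_pos (x : R) : 0 < npdf x.
Proof. apply Rdiv_lt_0_compat; [apply exp_pos|apply sqrt_2PI_pos]. Qed.

Lemma npdf_even (x : R) : npdf (- x) = npdf x.
Proof. unfold npdf; do 3 f_equal; ring. Qed.

Lemma npdf_derive (x : R) : is_derive npdf x (- x * npdf x).
Proof.
  unfold npdf; pose proof sqrt_2PI_pos.
  auto_derive; [lra|]; simpl; unfold Rdiv; field; lra.
Qed.

Lemma npdf_continuous (x : R) : continuous npdf x.
Proof. apply continuous_of_ex_derive; eexists; apply npdf_derive. Qed.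

Lemma ex_RInt_npdf (a b : R) : ex_RInt npdf a b.
Proof. apply ex_RInt_of_continuous; intros; apply npdf_continuous. Qed.

(* Substituting t = y / sqrt 2 relates the normal density to gauss. *)
Lemma RInt_npdf_gauss (y : R) : RInt npdf 0 y = gauss_int (y / sqrt 2) / sqrt PI.
Proof.
  set (k := / sqrt 2).
  assert (Hs2 : 0 < sqrt 2) by (apply sqrt_lt_R0; lra).
  pose proof sqrt_PI_pos as HsP.
  assert (Hs2P : sqrt (2 * PI) = sqrt 2 * sqrt PI)
    by (apply sqrt_mult; pose proof PI_RGT_0; lra).
  assert (Hkk : k * k = / 2) by (unfold k; rewrite <- Rinv_mult, sqrt_sqrt; lra).
  rewrite (RInt_ext _ (fun t => scal (/ sqrt PI) (scal k (gauss (k * t + 0))))).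
  2:{ intros t _; unfold scal; simpl; unfold mult; simpl; unfold npdf, gauss.
      rewrite Hs2P.
      replace (- ((k * t + 0) * (k * t + 0))) with (- t ^ 2 / 2)
        by (replace ((k * t + 0) * (k * t + 0)) with (k * k * (t * t)) by ring;
            rewrite Hkk; field).
      unfold k; field; lra. }
  rewrite (@RInt_scal R_CompleteNormedModule).
  2:{ apply ex_RInt_of_continuous; intros; apply continuous_of_ex_derive.
      unfold gauss, scal; simpl; unfold mult; simpl; auto_derive; auto. }
  rewrite (@RInt_comp_lin R_CompleteNormedModule) by apply ex_RInt_gauss.
  unfold gauss_int; replace (k * 0 + 0) with 0 by ring.
  replace (k * y + 0) with (y / sqrt 2) by (unfold k; field; lra).
  unfold scal; simpl; unfold mult; simpl; field; lra.
Qed.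

(* Symmetry of the density: the mass of [a, 0] equals that of [0, -a]. *)
Lemma RInt_npdf_opp (a : R) : RInt npdf a 0 = RInt npdf 0 (- a).
Proof.
  assert (H := @RInt_comp_lin R_CompleteNormedModule npdf (-1) 0 (- a) 0 (ex_RInt_npdf _ _)).
  rewrite (RInt_ext _ (fun y => opp (npdf y))) in H.
  2:{ intros; unfold scal, opp; simpl; unfold mult; simpl.
      replace (-1 * x + 0) with (- x) by ring; rewrite npdf_even; ring. }
  rewrite (@RInt_opp R_CompleteNormedModule) in H by apply ex_RInt_npdf.
  replace (-1 * - a + 0) with a in H by ring; replace (-1 * 0 + 0) with 0 in H by ring.
  rewrite <- (@opp_RInt_swap R_CompleteNormedModule) in H by apply ex_RInt_npdf.
  unfold opp in H; simpl in H; lra.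
Qed.

Lemma RInt_npdf_lt_half (y : R) : RInt npdf 0 y < 1 / 2.
Proof.
  pose proof sqrt_PI_pos.
  destruct (Rle_or_lt y 0) as [Hy|Hy].
  - rewrite <- (@opp_RInt_swap R_CompleteNormedModule) by apply ex_RInt_npdf.
    assert (0 <= RInt npdf y 0).
    { apply RInt_ge_0; auto; [apply ex_RInt_npdf|intros; left; apply npdf_pos]. }
    unfold opp; simpl; lra.
  - rewrite RInt_npdf_gauss.
    assert (H0 : 0 < y / sqrt 2) by (apply Rdiv_lt_0_compat; [lra|apply sqrt_lt_R0; lra]).
    pose proof (gauss_int_incr (y / sqrt 2) (y / sqrt 2 + 1) ltac:(lra)).
    pose proof (gauss_int_le (y / sqrt 2 + 1) ltac:(lra)).
    apply Rmult_lt_reg_r with (sqrt PI); auto.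
    unfold Rdiv at 1; rewrite Rmult_assoc, Rinv_l; lra.
Qed.

Lemma RInt_npdf_tends (eps : R) :
  0 < eps -> exists M, forall y, M <= y -> 1 / 2 - eps < RInt npdf 0 y.
Proof.
  intros He; pose proof sqrt_PI_pos.
  assert (Hs2 : 0 < sqrt 2) by (apply sqrt_lt_R0; lra).
  destruct (gauss_int_tends (eps * sqrt PI) ltac:(nra)) as [M HM].
  exists (M * sqrt 2); intros y Hy; rewrite RInt_npdf_gauss.
  assert (M <= y / sqrt 2).
  { apply Rmult_le_reg_r with (sqrt 2); auto.
    unfold Rdiv; rewrite Rmult_assoc, Rinv_l; lra. }
  specialize (HM _ H0).
  apply Rmult_lt_reg_r with (sqrt PI); auto.
  unfold Rdiv at 2; rewrite Rmult_assoc, Rinv_l; lra.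
Qed.

Lemma is_RInt_gen_npdf_left_half :
  is_RInt_gen npdf (Rbar_locally m_infty) (at_point 0) (1 / 2).
Proof.
  intros P [eps Heps].
  destruct (RInt_npdf_tends eps (cond_pos eps)) as [M HM].
  apply Filter_prod with (Q := fun a => a <= - M) (R := fun b => b = 0).
  - exists (- M); intros x Hx; lra.
  - reflexivity.
  - intros a b Ha Hb; simpl; subst b; exists (RInt npdf a 0); split.
    + apply (@RInt_correct R_CompleteNormedModule), ex_RInt_npdf.
    + apply Heps; rewrite RInt_npdf_opp.
      pose proof (HM (- a) ltac:(lra)); pose proof (RInt_npdf_lt_half (- a)).
      assert (Rabs (RInt npdf 0 (- a) - 1 / 2) < eps) by (apply Rabs_def1; lra).
      assumption.
Qed.

Lemma ncdf_half (x : R) : ncdf x = 1 / 2 + RInt npdf 0 x.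
Proof.
  unfold ncdf; apply (@is_RInt_gen_unique R_CompleteNormedModule); [try typeclasses eauto..|].
  apply (is_RInt_gen_Chasles npdf 0 (1 / 2) (RInt npdf 0 x)).
  - apply is_RInt_gen_npdf_left_half.
  - apply is_RInt_gen_at_point, (@RInt_correct R_CompleteNormedModule), ex_RInt_npdf.
Qed.

Lemma ncdf_opp (x : R) : ncdf (- x) = 1 - ncdf x.
Proof.
  rewrite !ncdf_half, <- (@opp_RInt_swap R_CompleteNormedModule) by apply ex_RInt_npdf.
  rewrite RInt_npdf_opp, Ropp_involutive; unfold opp; simpl; lra.
Qed.

Lemma ncdf_derive (x : R) : is_derive ncdf x (npdf x).
Proof.
  apply (is_derive_ext (fun x => 1 / 2 + RInt npdf 0 x)); [intros; symmetry; apply ncdf_half|].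
  eapply is_derive_eq.
  - apply (is_derive_plus (fun _ => 1 / 2) (fun x => RInt npdf 0 x)); [apply is_derive_const|].
    apply is_derive_RInt with 0; [|apply npdf_continuous].
    apply filter_forall; intros; apply (@RInt_correct R_CompleteNormedModule), ex_RInt_npdf.
  - unfold plus, zero; simpl; ring.
Qed.

Lemma ncdf_incr (x y : R) : x < y -> ncdf x < ncdf y.
Proof.
  intros H; apply (strict_incr_of_derive _ npdf); auto.
  - intros; apply ncdf_derive.
  - intros; apply npdf_pos.
Qed.

Lemma ncdf_range (x : R) : 0 < ncdf x < 1.
Proof.
  assert (Hlt1 : forall y, ncdf y < 1)
    by (intros y; rewrite ncdf_half; pose proof (RInt_npdf_lt_half y); lra).
  pose proof (Hlt1 x); pose proof (Hlt1 (- x)); rewrite ncdf_opp in *; lra.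
Qed.

Lemma ncdf_tends_1 (eps : R) : 0 < eps -> exists M, forall y, M <= y -> 1 - eps < ncdf y.
Proof.
  intros He; destruct (RInt_npdf_tends eps He) as [M HM].
  exists M; intros y Hy; rewrite ncdf_half; pose proof (HM y Hy); lra.
Qed.

(* By the intermediate value theorem ncdf is onto (0,1), so ncdf_inv is
   a genuine inverse there; it is strictly increasing. *)
Lemma ncdf_onto (p : R) : 0 < p < 1 -> exists z, ncdf z = p.
Proof.
  intros Hp.
  destruct (ncdf_tends_1 p ltac:(lra)) as [M1 H1].
  destruct (ncdf_tends_1 (1 - p) ltac:(lra)) as [M2 H2].
  specialize (H1 M1 (Rle_refl _)); specialize (H2 M2 (Rle_refl _)).
  assert (Hlo : ncdf (- M1) < p) by (rewrite ncdf_opp; lra).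
  destruct (IVT_gen ncdf (- M1) M2 p) as [z [_ Hz]].
  - intros x; apply continuity_pt_filterlim.
    apply continuous_of_ex_derive; eexists; apply ncdf_derive.
  - split; [apply Rle_trans with (ncdf (- M1)); [apply Rmin_l|lra]
           |apply Rle_trans with (ncdf M2); [lra|apply Rmax_r]].
  - exists z; auto.
Qed.

Lemma ncdf_inv_spec (p : R) : 0 < p < 1 -> ncdf (ncdf_inv p) = p.
Proof. intros Hp; unfold ncdf_inv; apply epsilon_spec, ncdf_onto, Hp. Qed.

Lemma ncdf_inv_incr (p q : R) : 0 < p -> p < q -> q < 1 -> ncdf_inv p < ncdf_inv q.
Proof.
  intros Hp Hpq Hq.
  pose proof (ncdf_inv_spec p ltac:(lra)) as Ep; pose proof (ncdf_inv_spec q ltac:(lra)) as Eq.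
  destruct (Rlt_or_le (ncdf_inv p) (ncdf_inv q)) as [Hlt|Hge]; auto.
  destruct (Rle_lt_or_eq_dec _ _ Hge) as [Hgt|Heq]; [apply ncdf_incr in Hgt|rewrite Heq in Eq]; lra.
Qed.

Lemma qf_range (b d : R) : 0 < d < b -> 0 < qf b d < 1.
Proof.
  intros Hd; unfold qf.
  assert (H1 : 1 < exp (b - d)) by (apply exp_gt_1; lra).
  assert (H2 : exp (b - d) < exp b) by (apply exp_increasing; lra).
  split; [apply Rdiv_lt_0_compat; lra|].
  apply Rmult_lt_reg_r with (exp b - 1); [lra|].
  unfold Rdiv; rewrite Rmult_assoc, Rinv_l; lra.
Qed.

(* q(delta) is the fraction of the marginal gain e^b - e^delta relative to
   the marginal insurance cost (e^b - 1) e^delta. *)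
Lemma qf_scaled (b d : R) : 0 < b -> (exp b - 1) * exp d * qf b d = exp b - exp d.
Proof.
  intros Hb; unfold qf; pose proof (exp_gt_1 b Hb).
  replace (exp b) with (exp (b - d) * exp d) at 3 by (rewrite <- exp_plus; f_equal; ring).
  field; lra.
Qed.

Lemma qf_decr (b d1 d2 : R) : 0 < b -> d1 < d2 -> qf b d2 < qf b d1.
Proof.
  intros Hb H; unfold qf; pose proof (exp_gt_1 b Hb).
  assert (exp (b - d2) < exp (b - d1)) by (apply exp_increasing; lra).
  apply Rmult_lt_compat_r; [apply Rinv_0_lt_compat|]; lra.
Qed.

Lemma quantile_decr (b d1 d2 : R) :
  0 < d1 -> d1 < d2 -> d2 < b -> ncdf_inv (qf b d2) < ncdf_inv (qf b d1).
Proof.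
  intros H1 H12 H2.
  pose proof (qf_range b d2 ltac:(lra)); pose proof (qf_range b d1 ltac:(lra)).
  apply ncdf_inv_incr; try lra; apply qf_decr; lra.
Qed.

(** The vault's problem *)

Section Vault.
Variables (N sigma b : R).
Hypotheses (HN : 0 < N) (Hsigma : 0 < sigma) (Hb : 0 < b).

(* The objective for F > 0, where Put is given by its Black-Scholes formula. *)
Definition value_formula (F d : R) : R :=
  N * exp (sigma ^ 2 / 2) + F * (exp b - exp d)
  - (exp b - 1) * (F * exp d * ncdf (- d_two N sigma F d) - N * ncdf (- d_one N sigma F d)).

Definition marginal_value (F d : R) : R :=
  exp b - exp d - (exp b - 1) * exp d * ncdf (- d_two N sigma F d).

Lemma Vobj_pos (F d : R) : 0 < F -> Vobj N sigma b F d = value_formula F d.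
Proof. intros H; unfold Vobj, Put, value_formula; destruct (Rlt_dec 0 F); [reflexivity|lra]. Qed.

Lemma Vobj_zero (d : R) : Vobj N sigma b 0 d = N * exp (sigma ^ 2 / 2).
Proof. unfold Vobj, Put; destruct (Rlt_dec 0 0); [lra|ring]. Qed.

Lemma neg_d_one_derive (F d : R) :
  0 < F -> is_derive (fun y => - d_one N sigma y d) F (/ (F * sigma)).
Proof.
  intros HF; unfold d_one; pose proof (exp_pos d).
  auto_derive; [repeat split; try apply Rdiv_lt_0_compat; nra|].
  field; repeat split; try lra; nra.
Qed.

Lemma neg_d_two_derive (F d : R) :
  0 < F -> is_derive (fun y => - d_two N sigma y d) F (/ (F * sigma)).
Proof.
  intros HF; unfold d_two, d_one; pose proof (exp_pos d).
  auto_derive; [repeat split; try apply Rdiv_lt_0_compat; nra|].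
  field; repeat split; try lra; nra.
Qed.

(* The Black-Scholes identity F e^d phi(d_2) = N phi(d_1): the density terms
   cancel when Put is differentiated in F. *)
Lemma density_identity (F d : R) :
  0 < F -> F * exp d * npdf (- d_two N sigma F d) = N * npdf (- d_one N sigma F d).
Proof.
  intros HF; rewrite !npdf_even; unfold npdf, d_two, d_one.
  pose proof (exp_pos d); pose proof sqrt_2PI_pos.
  set (L := ln (N / (F * exp d))).
  assert (HL : exp L = N / (F * exp d))
    by (apply exp_ln, Rdiv_lt_0_compat; nra).
  replace (- ((L + sigma ^ 2 / 2) / sigma - sigma) ^ 2 / 2)
    with (- ((L + sigma ^ 2 / 2) / sigma) ^ 2 / 2 + L) by (field; lra).
  rewrite exp_plus, HL; field; repeat split; lra.
Qed.

Lemma ncdf_comp_derive (g : R -> R) (x dg : R) :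
  is_derive g x dg -> is_derive (fun y => ncdf (g y)) x (npdf (g x) * dg).
Proof.
  intros H; eapply is_derive_eq; [apply (is_derive_comp ncdf g x _ _ (ncdf_derive (g x)) H)|].
  unfold scal; simpl; unfold mult; simpl; ring.
Qed.

Lemma value_formula_derive (F d : R) :
  0 < F -> is_derive (fun y => value_formula y d) F (marginal_value F d).
Proof.
  intros HF; unfold value_formula.
  pose proof (ncdf_comp_derive _ _ _ (neg_d_one_derive F d HF)) as D1.
  pose proof (ncdf_comp_derive _ _ _ (neg_d_two_derive F d HF)) as D2.
  pose proof (density_identity F d HF) as K.
  assert (D3 : is_derive (fun y => y * exp d * ncdf (- d_two N sigma y d)) F
                 (exp d * ncdf (- d_two N sigma F d)
                  + F * exp d * (npdf (- d_two N sigma F d) * / (F * sigma)))).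
  { eapply is_derive_eq.
    - apply (is_derive_mult (fun y => y * exp d) (fun y => ncdf (- d_two N sigma y d)));
        [auto_derive; auto; ring|exact D2|intros; unfold mult; simpl; ring].
    - unfold plus, mult, scal, one; simpl; unfold mult; simpl; ring. }
  assert (D4 : is_derive (fun y => N * ncdf (- d_one N sigma y d)) F
                 (N * (npdf (- d_one N sigma F d) * / (F * sigma))))
    by (apply is_derive_scal; exact D1).
  eapply is_derive_eq.
  - apply (is_derive_minus (fun y => N * exp (sigma ^ 2 / 2) + y * (exp b - exp d))).
    + apply (is_derive_plus (fun _ => N * exp (sigma ^ 2 / 2)) (fun y => y * (exp b - exp d)));
        [apply is_derive_const|auto_derive; auto; ring].
    + apply is_derive_scal, (is_derive_minus _ _ _ _ _ D3 D4).
  - unfold marginal_value, minus, plus, opp, zero, one, scal; simpl; unfold mult, plus, opp; simpl.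
    replace (N * (npdf (- d_one N sigma F d) * / (F * sigma)))
      with (F * exp d * (npdf (- d_two N sigma F d) * / (F * sigma)))
      by (rewrite <- Rmult_assoc, K; ring).
    ring.
Qed.

Lemma varphi_pos (d : R) : 0 < varphi N sigma b d.
Proof. unfold varphi; apply Rmult_lt_0_compat; [lra|apply exp_pos]. Qed.

Lemma neg_d_two_varphi (d : R) :
  - d_two N sigma (varphi N sigma b d) d = ncdf_inv (qf b d).
Proof.
  unfold d_two, d_one, varphi; set (z := ncdf_inv (qf b d)).
  replace (N / (N * exp (sigma * z - d - sigma ^ 2 / 2) * exp d))
    with (exp (- (sigma * z - sigma ^ 2 / 2))).
  - rewrite ln_exp; field; lra.
  - rewrite exp_Ropp.
    replace (sigma * z - sigma ^ 2 / 2) with ((sigma * z - d - sigma ^ 2 / 2) + d) by ring.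
    rewrite exp_plus; pose proof (exp_pos (sigma * z - d - sigma ^ 2 / 2)); pose proof (exp_pos d).
    field; repeat split; lra.
Qed.

Lemma neg_d_two_incr (F G d : R) : 0 < F -> F < G -> - d_two N sigma F d < - d_two N sigma G d.
Proof.
  intros HF HG.
  apply (strict_incr_of_derive (fun y => - d_two N sigma y d) (fun y => / (y * sigma))); auto.
  - intros c Hc; apply neg_d_two_derive; lra.
  - intros c Hc; apply Rinv_0_lt_compat; nra.
Qed.

Lemma marginal_value_factor (F d : R) :
  marginal_value F d = (exp b - 1) * exp d * (qf b d - ncdf (- d_two N sigma F d)).
Proof. unfold marginal_value; rewrite Rmult_minus_distr_l, (qf_scaled b d Hb); ring. Qed.

Lemma ncdf_neg_d_two_lt_q (F d : R) :
  0 < d < b -> 0 < F -> F < varphi N sigma b d -> ncdf (- d_two N sigma F d) < qf b d.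
Proof.
  intros Hd HF Hlt; rewrite <- (ncdf_inv_spec _ (qf_range b d Hd)), <- neg_d_two_varphi.
  apply ncdf_incr, neg_d_two_incr; auto.
Qed.

Lemma ncdf_neg_d_two_gt_q (F d : R) :
  0 < d < b -> varphi N sigma b d < F -> qf b d < ncdf (- d_two N sigma F d).
Proof.
  intros Hd Hgt; rewrite <- (ncdf_inv_spec _ (qf_range b d Hd)), <- neg_d_two_varphi.
  apply ncdf_incr, neg_d_two_incr; auto; apply varphi_pos.
Qed.

Lemma marginal_scale_pos (d : R) : 0 < (exp b - 1) * exp d.
Proof. pose proof (exp_gt_1 b Hb); pose proof (exp_pos d); nra. Qed.

Lemma value_incr (d F G : R) :
  0 < d < b -> 0 < F -> F < G -> G <= varphi N sigma b d ->
  Vobj N sigma b F d < Vobj N sigma b G d.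
Proof.
  intros Hd HF HFG HG; rewrite !Vobj_pos by lra.
  apply (strict_incr_of_derive (fun y => value_formula y d) (fun y => marginal_value y d)); auto.
  - intros c Hc; apply value_formula_derive; lra.
  - intros c Hc; rewrite marginal_value_factor; pose proof (marginal_scale_pos d).
    pose proof (ncdf_neg_d_two_lt_q c d Hd ltac:(lra) ltac:(lra)); nra.
Qed.

Lemma value_decr (d F G : R) :
  0 < d < b -> varphi N sigma b d <= F -> F < G ->
  Vobj N sigma b G d < Vobj N sigma b F d.
Proof.
  intros Hd HF HFG; pose proof (varphi_pos d); rewrite !Vobj_pos by lra.
  apply (strict_decr_of_derive (fun y => value_formula y d) (fun y => marginal_value y d)); auto.
  - intros c Hc; apply value_formula_derive; lra.
  - intros c Hc; rewrite marginal_value_factor; pose proof (marginal_scale_pos d).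
    pose proof (ncdf_neg_d_two_gt_q c d Hd ltac:(lra)); nra.
Qed.

(* Issuing up to varphi is at least as good as not issuing:
   V(F) - V(0) = (e^b - 1) (e^d F (q - Phi(-d_2)) + N Phi(-d_1)). *)
Lemma value_ge_zero_issuance (d F : R) :
  0 < d < b -> 0 < F -> F <= varphi N sigma b d ->
  Vobj N sigma b 0 d <= Vobj N sigma b F d.
Proof.
  intros Hd HF HFp; rewrite Vobj_zero, Vobj_pos by lra; unfold value_formula.
  assert (Hq : ncdf (- d_two N sigma F d) <= qf b d).
  { destruct (Rle_lt_or_eq_dec _ _ HFp) as [Hlt| ->].
    - left; apply ncdf_neg_d_two_lt_q; auto.
    - rewrite neg_d_two_varphi, ncdf_inv_spec by (apply qf_range; auto); lra. }
  pose proof (qf_scaled b d Hb); pose proof (marginal_scale_pos d); pose proof (exp_gt_1 b Hb).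
  pose proof (ncdf_range (- d_one N sigma F d)).
  assert (0 <= (exp b - 1) * exp d * F * (qf b d - ncdf (- d_two N sigma F d)))
    by (apply Rmult_le_pos; [apply Rmult_le_pos|]; lra).
  assert (0 <= (exp b - 1) * (N * ncdf (- d_one N sigma F d))) by (apply Rmult_le_pos; nra).
  nra.
Qed.

Lemma Vobj_varphi (d : R) :
  0 < d < b ->
  Vobj N sigma b (varphi N sigma b d) d =
  N * exp (sigma ^ 2 / 2) + N * ncdf (- d_one N sigma (varphi N sigma b d) d) * (exp b - 1).
Proof.
  intros Hd; rewrite Vobj_pos by apply varphi_pos; unfold value_formula.
  rewrite neg_d_two_varphi, (ncdf_inv_spec _ (qf_range b d Hd)), <- (qf_scaled b d Hb); ring.
Qed.

Lemma varphi_decr (d1 d2 : R) :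
  0 < d1 -> d1 < d2 -> d2 < b -> varphi N sigma b d2 < varphi N sigma b d1.
Proof.
  intros H1 H12 H2; pose proof (quantile_decr b d1 d2 H1 H12 H2).
  unfold varphi; apply Rmult_lt_compat_l; [lra|apply exp_increasing; nra].
Qed.

Variables (beta u : R).
Hypothesis Hbeta : 0 < beta.

Definition capped_issuance (d : R) : R := Rmin (varphi N sigma b d) (beta * N).

Lemma capped_issuance_range (d : R) : 0 < capped_issuance d <= beta * N.
Proof.
  unfold capped_issuance; pose proof (varphi_pos d).
  split; [apply Rmin_glb_lt; nra|apply Rmin_r].
Qed.

Lemma capped_issuance_opt (d F : R) :
  0 < d < b -> 0 <= F <= beta * N -> F <> capped_issuance d ->
  Vobj N sigma b F d < Vobj N sigma b (capped_issuance d) d.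
Proof.
  intros Hd HF Hne; pose proof (capped_issuance_range d) as [H0 Hcap].
  pose proof (Rmin_l (varphi N sigma b d) (beta * N)) as Hphi.
  fold (capped_issuance d) in Hphi.
  destruct (Rtotal_order F (capped_issuance d)) as [Hlt|[Heq|Hgt]]; [|contradiction|].
  - destruct (Rle_lt_or_eq_dec _ _ (proj1 HF)) as [HF0| <-]; [apply value_incr; auto|].
    apply Rle_lt_trans with (Vobj N sigma b (capped_issuance d / 2) d);
      [apply value_ge_zero_issuance|apply value_incr]; auto; lra.
  - assert (Hm : capped_issuance d = varphi N sigma b d).
    { unfold capped_issuance in *.
      destruct (Rle_dec (varphi N sigma b d) (beta * N)) as [Hle|Hgt'];
        [apply Rmin_left; auto|rewrite Rmin_right in Hgt; lra]. }
    rewrite Hm in *; apply value_decr; auto; lra.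
Qed.

Definition best_response (d : R) : R :=
  if Rle_dec u (Vobj N sigma b (capped_issuance d) d) then capped_issuance d else 0.

Lemma best_response_spec (d : R) :
  0 < d < b -> vault_best_response N sigma b beta u d (best_response d).
Proof.
  intros Hd; unfold best_response, vault_best_response, feasible.
  pose proof (capped_issuance_range d).
  destruct (Rle_dec u _) as [Hu|Hu].
  - left; split; [split; [lra|auto]|].
    intros F' [HF' _]; destruct (Req_dec F' (capped_issuance d)) as [->|E]; [lra|].
    left; apply capped_issuance_opt; auto.
  - right; split; auto; intros F' [HF' Hu'].
    destruct (Req_dec F' (capped_issuance d)) as [->|E]; [lra|].
    pose proof (capped_issuance_opt d F' Hd HF' E); lra.
Qed.

Lemma best_response_unique (d F : R) :
  0 < d < b -> vault_best_response N sigma b beta u d F -> F = best_response d.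
Proof.
  intros Hd H; unfold best_response; pose proof (capped_issuance_range d).
  destruct H as [[[HF Hu] Hmax] | [Hno ->]].
  - assert (HFe : F = capped_issuance d).
    { destruct (Req_dec F (capped_issuance d)) as [E|E]; auto.
      pose proof (capped_issuance_opt d F Hd HF E).
      assert (Hfeas : feasible N sigma b beta u d (capped_issuance d)) by (split; lra).
      specialize (Hmax _ Hfeas); lra. }
    subst F; destruct (Rle_dec u _); [reflexivity|lra].
  - destruct (Rle_dec u _) as [Hu|Hu]; auto.
    exfalso; apply (Hno (capped_issuance d)); split; [lra|auto].
Qed.

End Vault.

(** Governance's problem *)

Section Governance.
Variable sigma : R.
Hypothesis Hsigma : 0 < sigma.

(* G(z) = e^(sigma z) (1 - Phi(z)) has derivative e^(sigma z) m(z), where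
   m(z) = sigma (1 - Phi(z)) - phi(z) has derivative (z - sigma) phi(z). *)
Definition tail_growth (z : R) : R := exp (sigma * z) * (1 - ncdf z).
Definition tail_slope (z : R) : R := sigma * (1 - ncdf z) - npdf z.

Lemma tail_slope_derive (z : R) : is_derive tail_slope z ((z - sigma) * npdf z).
Proof.
  unfold tail_slope.
  assert (E1 : Derive (fun x : R => ncdf x) z = npdf z) by apply is_derive_unique, ncdf_derive.
  assert (E2 : Derive (fun x : R => npdf x) z = - z * npdf z)
    by apply is_derive_unique, npdf_derive.
  auto_derive; [split; [exists (npdf z); apply ncdf_derive|]; split;
                [exists (- z * npdf z); apply npdf_derive|exact I]|].
  rewrite E1, E2; ring.
Qed.

Lemma tail_growth_derive (z : R) :
  is_derive tail_growth z (exp (sigma * z) * tail_slope z).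
Proof.
  unfold tail_growth, tail_slope.
  assert (E : Derive (fun x : R => ncdf x) z = npdf z) by apply is_derive_unique, ncdf_derive.
  auto_derive; [exists (npdf z); apply ncdf_derive|].
  rewrite E; ring.
Qed.

Lemma tail_slope_decr (z w : R) : z < w -> w <= sigma -> tail_slope w < tail_slope z.
Proof.
  intros Hzw Hw; apply (strict_decr_of_derive _ (fun c => (c - sigma) * npdf c)); auto.
  - intros; apply tail_slope_derive.
  - intros c Hc; pose proof (npdf_pos c); nra.
Qed.

Lemma tail_slope_incr (z w : R) : sigma <= z -> z < w -> tail_slope z < tail_slope w.
Proof.
  intros Hz Hzw; apply (strict_incr_of_derive _ (fun c => (c - sigma) * npdf c)); auto.
  - intros; apply tail_slope_derive.
  - intros c Hc; pose proof (npdf_pos c); nra.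
Qed.

(* Past sigma, m increases towards its limit 0, so it stays negative. *)
Lemma tail_slope_neg (z : R) : sigma <= z -> tail_slope z < 0.
Proof.
  intros Hz; destruct (Rlt_or_le (tail_slope z) 0) as [H|H]; auto; exfalso.
  pose proof (tail_slope_incr z (z + 1) Hz ltac:(lra)) as H1.
  set (eta := tail_slope (z + 1)) in *.
  destruct (ncdf_tends_1 (eta / sigma) ltac:(apply Rdiv_lt_0_compat; lra)) as [M HM].
  set (w := Rmax M (z + 2)).
  pose proof (Rmax_l M (z + 2)); pose proof (Rmax_r M (z + 2)).
  pose proof (tail_slope_incr (z + 1) w ltac:(lra) ltac:(unfold w; lra)) as Hw.
  specialize (HM w ltac:(unfold w; lra)); pose proof (npdf_pos w).
  change (eta < sigma * (1 - ncdf w) - npdf w) in Hw.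
  assert (sigma * (1 - ncdf w) < eta).
  { apply Rmult_lt_reg_l with (/ sigma); [apply Rinv_0_lt_compat; lra|].
    rewrite <- Rmult_assoc, Rinv_l by lra; unfold Rdiv in HM; lra. }
  lra.
Qed.

Lemma tail_growth_peak (zs z : R) :
  tail_slope zs = 0 -> z <> zs -> tail_growth z < tail_growth zs.
Proof.
  intros Hm Hne.
  assert (Hzs : zs < sigma).
  { destruct (Rlt_or_le zs sigma) as [H|H]; auto; pose proof (tail_slope_neg zs H); lra. }
  destruct (Rtotal_order z zs) as [H|[H|H]]; [|contradiction|].
  - apply (strict_incr_of_derive _ (fun c => exp (sigma * c) * tail_slope c)); auto.
    + intros; apply tail_growth_derive.
    + intros c Hc; pose proof (tail_slope_decr c zs (proj2 Hc) (Rlt_le _ _ Hzs)).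
      pose proof (exp_pos (sigma * c)); nra.
  - apply (strict_decr_of_derive _ (fun c => exp (sigma * c) * tail_slope c)); auto.
    + intros; apply tail_growth_derive.
    + intros c Hc; pose proof (exp_pos (sigma * c)).
      assert (tail_slope c < 0).
      { destruct (Rlt_or_le c sigma) as [Hc'|Hc']; [|apply tail_slope_neg; auto].
        pose proof (tail_slope_decr zs c (proj1 Hc) (Rlt_le _ _ Hc')); lra. }
      nra.
Qed.

End Governance.

Lemma payoff_varphi_tail_growth (N sigma b d : R) :
  0 < d < b ->
  varphi N sigma b d * (exp d - 1) =
  N * exp (- (sigma ^ 2 / 2)) * exp (- b) * (exp b - 1)
  * tail_growth sigma (ncdf_inv (qf b d)).
Proof.
  intros Hd; unfold tail_growth; rewrite (ncdf_inv_spec _ (qf_range b d Hd)).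
  unfold varphi, qf; set (z := ncdf_inv ((exp (b - d) - 1) / (exp b - 1))).
  pose proof (exp_gt_1 b ltac:(lra)); pose proof (exp_pos (- d)).
  replace (sigma * z - d - sigma ^ 2 / 2) with (sigma * z + - d + - (sigma ^ 2 / 2)) by ring.
  replace (b - d) with (b + - d) by ring.
  rewrite !exp_plus.
  replace (exp d) with (/ exp (- d)) by (rewrite exp_Ropp, Rinv_inv; reflexivity).
  rewrite (exp_Ropp b); field; lra.
Qed.

Lemma foc_tail_slope (sigma b ds : R) :
  0 < ds < b ->
  sigma / npdf (ncdf_inv (qf b ds)) * ((exp b - exp (b - ds)) / (exp b - 1)) = 1 ->
  tail_slope sigma (ncdf_inv (qf b ds)) = 0.
Proof.
  intros Hds Hfoc; set (zs := ncdf_inv (qf b ds)) in *.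
  pose proof (ncdf_inv_spec _ (qf_range b ds Hds)) as Hz; fold zs in Hz.
  pose proof (exp_gt_1 b ltac:(lra)); pose proof (npdf_pos zs).
  assert (E : (exp b - exp (b - ds)) / (exp b - 1) = 1 - ncdf zs)
    by (rewrite Hz; unfold qf; field; lra).
  rewrite E in Hfoc; unfold tail_slope.
  replace (sigma * (1 - ncdf zs)) with (sigma / npdf zs * (1 - ncdf zs) * npdf zs)
    by (field; lra).
  rewrite Hfoc; ring.
Qed.

(** The equilibrium *)

Section Equilibrium.
Variables (N sigma b beta u delta_beta delta_star : R).
Hypotheses (HN : 0 < N) (Hsigma : 0 < sigma) (Hb : 0 < b) (Hbeta : 0 < beta).
Hypotheses (Hdb : 0 < delta_beta < b) (Hdb_eq : varphi N sigma b delta_beta = beta * N).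
Hypotheses (Hds : 0 < delta_star < b) (Hiii : delta_beta < delta_star).
Hypothesis Hpeak : tail_slope sigma (ncdf_inv (qf b delta_star)) = 0.
Hypothesis Hiv : u <= N * exp (sigma ^ 2 / 2)
  + N * ncdf (- d_one N sigma (varphi N sigma b delta_star) delta_star) * (exp b - 1).

Lemma equilibrium_strategy (delta : R) (Fs : R -> R) :
  stackelberg_eq N sigma b beta u delta Fs ->
  forall d, 0 < d < b -> Fs d = best_response N sigma b beta u d.
Proof. intros [_ [Hbr _]] d Hd; apply best_response_unique; auto. Qed.

Lemma varphi_payoff_max (d : R) :
  0 < d < b -> d <> delta_star ->
  varphi N sigma b d * (exp d - 1) < varphi N sigma b delta_star * (exp delta_star - 1).
Proof.
  intros Hd Hne; rewrite !payoff_varphi_tail_growth by auto.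
  apply Rmult_lt_compat_l.
  - pose proof (exp_gt_1 b Hb); pose proof (exp_pos (- (sigma ^ 2 / 2))).
    pose proof (exp_pos (- b)).
    repeat apply Rmult_lt_0_compat; lra.
  - apply tail_growth_peak; auto; intros E.
    destruct (Rtotal_order d delta_star) as [H|[H|H]]; [|contradiction|].
    + pose proof (quantile_decr b d delta_star (proj1 Hd) H (proj2 Hds)); lra.
    + pose proof (quantile_decr b delta_star d (proj1 Hds) H (proj2 Hd)); lra.
Qed.

(* At delta_star the leverage cap does not bind, since delta_beta < delta_star ... *)
Lemma varphi_star_below_cap : varphi N sigma b delta_star < beta * N.
Proof. rewrite <- Hdb_eq; apply varphi_decr; auto; lra. Qed.

(* ... and condition (iv) is exactly participation at varphi(delta_star). *)
Lemma feasible_star : feasible N sigma b beta u delta_star (varphi N sigma b delta_star).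
Proof.
  pose proof varphi_star_below_cap; pose proof (varphi_pos N sigma b HN delta_star).
  split; [lra|rewrite Vobj_varphi; auto].
Qed.

Lemma best_response_star :
  best_response N sigma b beta u delta_star = varphi N sigma b delta_star.
Proof.
  pose proof varphi_star_below_cap as Hlt.
  assert (Hcap : capped_issuance N sigma b beta delta_star = varphi N sigma b delta_star)
    by (apply Rmin_left; lra).
  unfold best_response; rewrite Hcap, Vobj_varphi by auto.
  destruct (Rle_dec u _); [reflexivity|contradiction].
Qed.

(* Every other rate gives governance strictly less: without participation it
   earns 0, on the uncapped branch use varphi_payoff_max, and on the capped
   branch delta < delta_beta, which is dominated by delta_beta itself. *)
Lemma gov_payoff_lt (d : R) :
  0 < d < b -> d <> delta_star ->
  gov_payoff d (best_response N sigma b beta u d)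
  < gov_payoff delta_star (best_response N sigma b beta u delta_star).
Proof.
  intros Hd Hne; unfold gov_payoff; rewrite best_response_star.
  assert (Hpos : 0 < varphi N sigma b delta_star * (exp delta_star - 1)).
  { apply Rmult_lt_0_compat; [apply varphi_pos; auto|pose proof (exp_gt_1 delta_star); lra]. }
  unfold best_response, capped_issuance; destruct (Rle_dec u _) as [_|_]; [|lra].
  destruct (Rle_dec (varphi N sigma b d) (beta * N)) as [Hle|Hgt].
  - rewrite Rmin_left by auto; apply varphi_payoff_max; auto.
  - rewrite Rmin_right by lra.
    assert (Hdlt : d < delta_beta).
    { destruct (Rlt_or_le d delta_beta) as [H|H]; auto.
      destruct (Rle_lt_or_eq_dec _ _ H) as [H'|<-]; [|lra].
      pose proof (varphi_decr N sigma b HN Hsigma delta_beta d (proj1 Hdb) H' (proj2 Hd)); lra. }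
    apply Rlt_trans with (varphi N sigma b delta_beta * (exp delta_beta - 1)).
    + rewrite Hdb_eq; apply Rmult_lt_compat_l; [nra|].
      pose proof (exp_increasing _ _ Hdlt); lra.
    + apply varphi_payoff_max; auto; lra.
Qed.

End Equilibrium.

Theorem theorem1 (N sigma b beta u : R)
  (HN : 0 < N) (Hsigma : 0 < sigma) (Hb : 0 < b) (Hbeta : 0 < beta)
  (Hi : sigma < 2 * npdf 0)
  (Hii : beta < (exp b + 1) / 2 * exp (- b - sigma ^ 2 / 2))
  (delta_beta delta_star : R)
  (Hdb : 0 < delta_beta < b)
  (Hdb_eq : varphi N sigma b delta_beta = beta * N)
  (Hds : delta_th b < delta_star < b)
  (Hds_eq : sigma / npdf (ncdf_inv (qf b delta_star))
              * ((exp b - exp (b - delta_star)) / (exp b - 1)) = 1)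
  (Hiii : delta_beta < delta_star)
  (Hiv : u <= N * exp (sigma ^ 2 / 2)
              + N * ncdf (- d_one N sigma (varphi N sigma b delta_star) delta_star)
                  * (exp b - 1)) :
  (exists Fs : R -> R,
      stackelberg_eq N sigma b beta u delta_star Fs /\
      Fs delta_star = varphi N sigma b delta_star /\
      feasible N sigma b beta u delta_star (Fs delta_star)) /\
  (forall (delta : R) (Fs : R -> R),
      stackelberg_eq N sigma b beta u delta Fs ->
      delta = delta_star /\ Fs delta = varphi N sigma b delta_star /\
      feasible N sigma b beta u delta (Fs delta)) /\
  (forall (delta1 delta2 : R) (Fs1 Fs2 : R -> R),
      stackelberg_eq N sigma b beta u delta1 Fs1 ->
      stackelberg_eq N sigma b beta u delta2 Fs2 ->
      forall d, 0 < d < b -> Fs1 d = Fs2 d).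
Proof.
  assert (Hds' : 0 < delta_star < b) by lra.
  pose proof (foc_tail_slope sigma b delta_star Hds' Hds_eq) as Hpeak.
  set (BR := best_response N sigma b beta u).
  pose proof (best_response_star N sigma b beta u delta_beta delta_star
                HN Hsigma Hb Hdb Hdb_eq Hds' Hiii Hiv) as HBR.
  pose proof (gov_payoff_lt N sigma b beta u delta_beta delta_star
                HN Hsigma Hb Hbeta Hdb Hdb_eq Hds' Hiii Hpeak Hiv) as Hgov.
  pose proof (feasible_star N sigma b beta u delta_beta delta_star
                HN Hsigma Hb Hdb Hdb_eq Hds' Hiii Hiv) as Hfeas.
  split; [|split].
  - exists BR; split; [|split; [exact HBR|unfold BR; rewrite HBR; exact Hfeas]].
    split; [exact Hds'|split].
    + intros d Hd; apply best_response_spec; auto.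
    + intros d Hd; destruct (Req_dec d delta_star) as [->|Hne]; [lra|].
      left; apply Hgov; auto.
  - intros delta Fs Heq.
    pose proof (equilibrium_strategy N sigma b beta u HN Hsigma Hb Hbeta delta Fs Heq) as HFs.
    destruct Heq as [Hdelta [_ Hopt]].
    assert (delta = delta_star) as ->.
    { destruct (Req_dec delta delta_star) as [E|E]; auto; exfalso.
      specialize (Hopt delta_star Hds'); rewrite !HFs in Hopt by auto.
      pose proof (Hgov delta Hdelta E); lra. }
    rewrite HFs by exact Hds'; rewrite HBR; split; [reflexivity|split; [reflexivity|exact Hfeas]].
  - intros delta1 delta2 Fs1 Fs2 H1 H2 d Hd.
    rewrite (equilibrium_strategy N sigma b beta u HN Hsigma Hb Hbeta _ _ H1 d Hd),
            (equilibrium_strategy N sigma b beta u HN Hsigma Hb Hbeta _ _ H2 d Hd).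
    reflexivity.
Qed.
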